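(* Let $Q$ be a finite set with $|Q|\ge2$, let $0\le r\le m$ be integers, let $G_m$ be the subgroup of $\mathcal D_m$ generated by some $r$ of the elements $g_0,\dots,g_{m-1}$, let $W=\{w\in Q^{\mathcal D_m}: w(g+\cdot)=w(\cdot)\ \forall g\in G_m\}$, and let $\nu$ be the uniform probability measure on $W$ (regarded as a measure on $Q^{\mathcal D_m}$). Then for every sufficiently small $\varepsilon>0$ there are constants $0<c\le C$ depending only on $\varepsilon$ and $|Q|$ such that $c\,2^{m-r}\le \mathbb H_\varepsilon(Q^{\mathcal D_m},\nu,\operatorname{dist}_m)\le C\,2^{m-r}$ whenever $m-r$ is large enough; i.e. $\mathbb H_\varepsilon(Q^{\mathcal D_m},\nu,\operatorname{dist}_m)\asymp 2^{m-r}$ as $m-r\to\infty$.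
   Context: $\mathcal D=\bigoplus_{i\ge0}\mathbb Z/2\mathbb Z$ with generators $g_0,g_1,\dots$; $\mathcal D_m=\langle g_0,\dots,g_{m-1}\rangle$ (of order $2^m$). $\mathcal T_m$ is the group of bijections $S$ of $\mathcal D_m$ that, for each $0<j<m$, map every coset of $\mathcal D_j$ in $\mathcal D_m$ onto a coset of $\mathcal D_j$ (this group is isomorphic to the automorphism group of the binary tree of height $m$); it acts on $Q^{\mathcal D_m}$ by $(Sw)(g)=w(S^{-1}g)$. $d_H(w_1,w_2)=2^{-m}|\{g\in\mathcal D_m:w_1(g)\ne w_2(g)\}|$ is the normalized Hamming metric, and $\operatorname{dist}_m(w_1,w_2)=\min_{S\in\mathcal T_m}d_H(w_1,Sw_2)$. For a semimetric probability space, $\mathbb H_\varepsilon$ is the binary logarithm of the least $k$ such that the space can be partitioned into sets $X_0,\dots,X_k$ with measure of $X_0$ less than $\varepsilon$ and each $X_j$, $j\ge1$, of diameter less than $\varepsilon$. *)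

From Stdlib Require Import Reals ClassicalEpsilon.
From HB Require Import structures.
From mathcomp Require Import all_boot all_fingroup.

Set Implicit Arguments.
Unset Strict Implicit.
Unset Printing Implicit Defensive.

Definition Dm (m : nat) : finType := {ffun 'I_m -> bool}.

Definition dadd (m : nat) (x y : Dm m) : Dm m := [ffun i => addb (x i) (y i)].

(* D_j inside D_m: the subgroup generated by g_0,...,g_{j-1},
   i.e. the elements with no coordinate >= j *)
Definition Dsub (m j : nat) : {set Dm m} :=
  [set x : Dm m | [forall i : 'I_m, (j <= i)%N ==> ~~ x i]].

Definition coset_D (m j : nat) (x : Dm m) : {set Dm m} :=
  [set dadd x y | y in Dsub m j].

Definition Tm (m : nat) : {set {perm Dm m}} :=
  [set S : {perm Dm m} |
     [forall j : 'I_m, (0 < j)%N ==>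
        [forall x : Dm m, [exists z : Dm m,
            S @: coset_D j x == coset_D j z]]]].

Definition Conf (Q : finType) (m : nat) : finType := {ffun Dm m -> Q}.

Definition tact (Q : finType) (m : nat) (S : {perm Dm m}) (w : Conf Q m)
  : Conf Q m := [ffun g => w ((S^-1)%g g)].

Local Open Scope R_scope.

Definition dH (Q : finType) (m : nat) (w1 w2 : Conf Q m) : R :=
  INR #|[set g | w1 g != w2 g]| / 2 ^ m.

(* dist_m(w1,w2) = min_{S in T_m} dH(w1, S w2); the identity is in T_m,
   so starting the fold at dH w1 w2 gives exactly the minimum *)
Definition dist_m (Q : finType) (m : nat) (w1 w2 : Conf Q m) : R :=
  \big[Rmin/dH w1 w2]_(S in Tm m) dH w1 (tact S w2).

(* subgroup of D_m generated by {g_i : i in I}: elements supported in I *)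
Definition Ggen (m : nat) (I : {set 'I_m}) : {set Dm m} :=
  [set x : Dm m | [forall i : 'I_m, x i ==> (i \in I)]].

Definition Winv (Q : finType) (m : nat) (G : {set Dm m}) : {set Conf Q m} :=
  [set w : Conf Q m | [forall g in G, [forall h : Dm m, w (dadd g h) == w h]]].

Definition nu_unif (T : finType) (W : {set T}) (X : {set T}) : R :=
  INR #|X :&: W| / INR #|W|.

Definition diam (T : finType) (d : T -> T -> R) (X : {set T}) : R :=
  \big[Rmax/0]_(x in X) \big[Rmax/0]_(y in X) d x y.

(* the space can be partitioned into X_0,...,X_k (X_j = f^{-1}(j)) with
   mu(X_0) < eps and diam X_j < eps for j >= 1 *)
Definition admissible (T : finType) (mu : {set T} -> R) (d : T -> T -> R)
  (eps : R) (k : nat) : Prop :=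
  exists f : T -> 'I_k.+1,
    mu [set x | nat_of_ord (f x) == 0%N] < eps /\
    forall j : 'I_k.+1, (0 < j)%N -> diam d [set x | f x == j] < eps.

Definition least_admissible (T : finType) (mu : {set T} -> R)
  (d : T -> T -> R) (eps : R) (k : nat) : Prop :=
  admissible mu d eps k /\ forall k', admissible mu d eps k' -> (k <= k')%N.

(* the least such k (it exists whenever eps > 0) *)
Definition kmin (T : finType) (mu : {set T} -> R) (d : T -> T -> R) (eps : R)
  : nat := epsilon (inhabits 0%N) (least_admissible mu d eps).

Definition log2 (x : R) : R := ln x / ln 2.

Definition Hent (T : finType) (mu : {set T} -> R) (d : T -> T -> R) (eps : R)
  : R := log2 (INR (kmin mu d eps)).

(* A tree automorphism of D_(m+1) either fixes or swaps the two halves g_m = 0 and g_m = 1 and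
   acts on each half as a tree automorphism of D_m.  So [tree_dist x y], the least number of
   mismatches reachable by choosing level by level whether to swap halves, is at most
   2^m dist_m(x, y).
   Weight each pair (x, y) of W by 16^(-tree_dist x y / 2^r) and let M be the total weight.  When
   g_m is in G, passing from m to m + 1 leaves M unchanged; otherwise M is at most twice the square
   of the previous value.  A direct count at m - r = 1 then gives M <= 1/2 (7/8)^(2^(m-r-1)) |W|^2.
   All pairs of a set of dist_m-diameter < eps have weight >= 16^(-eps 2^(m-r)), so for small eps
   such a set has at most (15/16)^(2^(m-r-2)) |W| points, and every admissible partition has more
   than (1 - eps) (16/15)^(2^(m-r-2)) blocks, while singletons give |W| = |Q|^(2^(m-r)) blocks. *)
From Stdlib Require Import Reals Lra Classical ClassicalEpsilon Wf_nat.
From HB Require Import structures.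
From mathcomp Require Import all_boot all_fingroup Rstruct zify.

Set Implicit Arguments.
Unset Strict Implicit.
Unset Printing Implicit Defensive.

Definition agree_from (m j : nat) (a b : Dm m) : bool :=
  [forall i : 'I_m, (j <= i)%N ==> (a i == b i)].

Section AgreeFrom.
Variables m j : nat.

Lemma agree_from_refl (a : Dm m) : agree_from j a a.
Proof. by apply/forallP => i; rewrite eqxx implybT. Qed.

Lemma agree_from_sym (a b : Dm m) : agree_from j a b = agree_from j b a.
Proof. by apply/forallP/forallP => H i; rewrite eq_sym; apply: H. Qed.

Lemma agree_from_trans (a b c : Dm m) :
  agree_from j a b -> agree_from j b c -> agree_from j a c.
Proof.
move=> /forallP Hab /forallP Hbc; apply/forallP => i; apply/implyP => hi.
by rewrite (eqP (implyP (Hab i) hi)) (implyP (Hbc i) hi).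
Qed.

Lemma agree_from_ge (a b : Dm m) : (m <= j)%N -> agree_from j a b.
Proof.
move=> hj; apply/forallP => i; apply/implyP => hi.
by have := leq_trans hj hi; rewrite leqNgt ltn_ord.
Qed.

Lemma mem_coset_D (x y : Dm m) : (y \in coset_D j x) = agree_from j y x.
Proof.
apply/imsetP/idP => [[z hz ->]|/forallP Hyx].
  move: hz; rewrite inE => /forallP hz.
  apply/forallP => i; apply/implyP => hi; rewrite ffunE.
  by rewrite (negbTE (implyP (hz i) hi)) addbF.
exists (dadd x y).
  rewrite inE; apply/forallP => i; apply/implyP => hi; rewrite ffunE.
  by rewrite (eqP (implyP (Hyx i) hi)) addbb.
by apply/ffunP => i; rewrite !ffunE addbA addbb.
Qed.

End AgreeFrom.

Lemma agree_from0 m (a b : Dm m) : agree_from 0 a b = (a == b).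
Proof.
apply/forallP/eqP => [H|->]; last by move=> i; rewrite eqxx.
by apply/ffunP => i; apply/eqP; apply: (H i).
Qed.

Definition tree_map m (s : Dm m -> Dm m) :=
  forall j a b, agree_from j a b = agree_from j (s a) (s b).

Lemma Tm_tree_map m (S : {perm Dm m}) : S \in Tm m -> tree_map S.
Proof.
move=> HS [|j] a b; first by rewrite !agree_from0 (inj_eq (@perm_inj _ S)).
have [hm|hm] := leqP m j.+1; first by rewrite !agree_from_ge.
move: HS; rewrite inE => /forallP /(_ (Ordinal hm)) /implyP /(_ isT).
move=> /forallP /(_ a) /existsP [z /eqP Hz] /=.
have Saz : agree_from j.+1 (S a) z.
  by rewrite -mem_coset_D -Hz imset_f // mem_coset_D agree_from_refl.
apply/idP/idP => Hab.
  have : S b \in coset_D j.+1 z by rewrite -Hz imset_f // mem_coset_D agree_from_sym.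
  by rewrite mem_coset_D agree_from_sym; apply: agree_from_trans.
have : S b \in coset_D j.+1 z.
  by rewrite mem_coset_D; apply: agree_from_trans Saz; rewrite agree_from_sym.
by rewrite -Hz => /imsetP [c hc /perm_inj ->]; rewrite agree_from_sym -mem_coset_D.
Qed.

Lemma tree_map_invg m (S : {perm Dm m}) : tree_map S -> tree_map (S^-1)%g.
Proof. by move=> HS j a b; rewrite [RHS]HS !permKV. Qed.

Section SplitTop.
Variable m : nat.

(* [D_(m+1)] is [D_m * bool], the last coordinate [ord_max] playing the role of [g_m]. *)
Definition dlow (g : Dm m.+1) : Dm m := [ffun i => g (lift ord_max i)].
Definition dtop (g : Dm m.+1) : bool := g ord_max.
Definition dext (a : Dm m) (b : bool) : Dm m.+1 :=
  [ffun i => if unlift ord_max i is Some k then a k else b].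

Lemma dlow_ext a b : dlow (dext a b) = a.
Proof. by apply/ffunP => i; rewrite !ffunE liftK. Qed.

Lemma dtop_ext a b : dtop (dext a b) = b.
Proof. by rewrite /dtop ffunE unlift_none. Qed.

Lemma dext_low_top (g : Dm m.+1) : dext (dlow g) (dtop g) = g.
Proof. by apply/ffunP => i; rewrite ffunE; case: unliftP => [k ->|->]; rewrite ?ffunE. Qed.

Lemma dadd_ext a b a' b' : dadd (dext a b) (dext a' b') = dext (dadd a a') (addb b b').
Proof. by apply/ffunP => i; rewrite !ffunE; case: unliftP => [k _|_]; rewrite ?ffunE. Qed.

Lemma agree_from_ext j a b a' b' : (j <= m)%N ->
  agree_from j (dext a b) (dext a' b') = (b == b') && agree_from j a a'.
Proof.
move=> hj; apply/forallP/andP => [H|[/eqP <- /forallP H] i].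
  split; first by have := implyP (H ord_max) hj; rewrite !ffunE unlift_none.
  apply/forallP => i; apply/implyP => hi.
  by have := implyP (H (lift ord_max i)); rewrite lift_max !ffunE liftK; apply.
rewrite !ffunE; case: unliftP => [k ->|_]; last by rewrite eqxx implybT.
by rewrite lift_max; apply: H.
Qed.

Lemma agree_from_top (g g' : Dm m.+1) : agree_from m g g' = (dtop g == dtop g').
Proof.
rewrite -[g]dext_low_top -[g']dext_low_top agree_from_ext // agree_from_ge //.
by rewrite andbT !dtop_ext.
Qed.

Lemma big_Dm_succ (R : Type) (idx : R) (op : Monoid.com_law idx) (F : Dm m.+1 -> R) :
  \big[op/idx]_(g : Dm m.+1) F g = \big[op/idx]_(b : bool) \big[op/idx]_(a : Dm m) F (dext a b).
Proof.
rewrite (reindex (fun p : Dm m * bool => dext p.1 p.2)); last first.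
  exists (fun g => (dlow g, dtop g)) => [[a b] _|g _] /=.
    by rewrite dlow_ext dtop_ext.
  by rewrite dext_low_top.
by rewrite -(pair_bigA _ (fun a b => F (dext a b))) /= exchange_big.
Qed.

End SplitTop.

Section TreeMapSplit.
Variables (m : nat) (s : Dm m.+1 -> Dm m.+1).
Hypothesis s_tree : tree_map s.

Definition top_map (b : bool) : bool := dtop (s (dext [ffun=> false] b)).
Definition low_map (b : bool) (a : Dm m) : Dm m := dlow (s (dext a b)).

Lemma tree_map_ext a b : s (dext a b) = dext (low_map b a) (top_map b).
Proof.
have : agree_from m (dext a b) (dext [ffun=> false] b).
  by rewrite agree_from_ext // eqxx agree_from_ge.
by rewrite s_tree agree_from_top /top_map => /eqP <-; rewrite dext_low_top.
Qed.

Lemma top_map_true : top_map true = ~~ top_map false.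
Proof.
have : agree_from m (dext (m := m) [ffun=> false] true) (dext [ffun=> false] false) = false.
  by rewrite agree_from_ext.
by rewrite s_tree !tree_map_ext agree_from_top !dtop_ext; case: (top_map _); case: (top_map _).
Qed.

Lemma tree_map_low b : tree_map (low_map b).
Proof.
move=> j a a'; have [hj|hj] := leqP j m; last by rewrite !agree_from_ge // ltnW.
by rewrite -[agree_from j a a']andTb -(eqxx b) -agree_from_ext // s_tree !tree_map_ext
  agree_from_ext // eqxx.
Qed.

End TreeMapSplit.

Section Halves.
Variables (Q : finType) (m : nat).

Definition half (x : Conf Q m.+1) (b : bool) : Conf Q m := [ffun a => x (dext a b)].

Definition glue (x0 x1 : Conf Q m) : Conf Q m.+1 :=
  [ffun g => if dtop g then x1 (dlow g) else x0 (dlow g)].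

Lemma glue_ext x0 x1 a b : glue x0 x1 (dext a b) = (if b then x1 else x0) a.
Proof. by rewrite ffunE dtop_ext dlow_ext; case: b. Qed.

Lemma half_glue x0 x1 b : half (glue x0 x1) b = if b then x1 else x0.
Proof. by apply/ffunP => a; rewrite ffunE glue_ext; case: b. Qed.

Lemma glue_half x : glue (half x false) (half x true) = x.
Proof. by apply/ffunP => g; rewrite !ffunE -[in RHS](dext_low_top g); case: (dtop g). Qed.

Lemma big_Conf_succ (R : Type) (idx : R) (op : Monoid.com_law idx) (F : Conf Q m.+1 -> R) :
  \big[op/idx]_(x : Conf Q m.+1) F x =
  \big[op/idx]_(x0 : Conf Q m) \big[op/idx]_(x1 : Conf Q m) F (glue x0 x1).
Proof.
rewrite (reindex (fun p : Conf Q m * Conf Q m => glue p.1 p.2)); last first.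
  exists (fun x => (half x false, half x true)) => [[x0 x1] _|x _] /=.
    by rewrite !half_glue.
  by rewrite glue_half.
by rewrite -(pair_bigA _ (fun x0 x1 => F (glue x0 x1))).
Qed.

End Halves.

Fixpoint tree_dist (Q : finType) (m : nat) : Conf Q m -> Conf Q m -> nat :=
  match m return Conf Q m -> Conf Q m -> nat with
  | 0 => fun x y => x != y
  | m'.+1 => fun x y =>
     minn (tree_dist (half x false) (half y false) + tree_dist (half x true) (half y true))
          (tree_dist (half x false) (half y true) + tree_dist (half x true) (half y false))
  end.

Lemma tree_dist_le_mismatch (Q : finType) m (s : Dm m -> Dm m) (x y : Conf Q m) :
  tree_map s -> (tree_dist x y <= #|[set g | x g != y (s g)]|)%N.
Proof.
move=> s_tree; suff : (tree_dist x y <= \sum_(g : Dm m) (x g != y (s g) : nat))%N.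
  move/leq_trans; apply; apply: eq_leq; rewrite -sum1_card [RHS]big_mkcond /=.
  by apply: eq_bigr => g _; rewrite inE; case: (_ != _).
elim: m s x y s_tree => [|m IH] s x y s_tree /=.
  pose g0 : Dm 0 := [ffun=> false].
  have Dm0_eq (g : Dm 0) : g = g0 by apply/ffunP => -[].
  rewrite (bigD1 g0) //= [s g0]Dm0_eq.
  have [-> //|neq_xy] := eqVneq x y.
  suff -> : x g0 != y g0 by [].
  by apply: contraNneq neq_xy => eq0; apply/eqP/ffunP => g; rewrite (Dm0_eq g).
have half_le b : (tree_dist (half x b) (half y (top_map s b)) <=
    \sum_(a : Dm m) (x (dext a b) != y (s (dext a b)) : nat))%N.
  apply: leq_trans (IH _ _ _ (tree_map_low s_tree b)) _.
  by apply: eq_leq; apply: eq_bigr => a _; rewrite !ffunE (tree_map_ext s_tree).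
rewrite big_Dm_succ big_bool /=.
have := half_le true; have := half_le false.
rewrite (top_map_true s_tree); case: (top_map s false) => /= h0 h1.
  by apply: leq_trans (geq_minr _ _) _; rewrite addnC leq_add.
by apply: leq_trans (geq_minl _ _) _; rewrite addnC leq_add.
Qed.

Definition restrI m (I : {set 'I_m.+1}) : {set 'I_m} := [set i | lift ord_max i \in I].

Lemma card_restrI m (I : {set 'I_m.+1}) : #|I| = (#|restrI I| + (ord_max \in I))%N.
Proof.
rewrite -!sum1_card big_mkcond big_ord_recr /= [in RHS]big_mkcond /=.
congr (_ + _)%N; apply: eq_bigr => i _; rewrite inE.
by have -> : widen_ord (leqnSn m) i = lift ord_max i by exact/val_inj/esym/lift_max.
Qed.

Lemma card_set_ord_le m (I : {set 'I_m}) : (#|I| <= m)%N.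
Proof. by rewrite -[m in (_ <= m)%N]card_ord max_card. Qed.

Lemma Ggen_ext m (I : {set 'I_m.+1}) a b :
  (dext a b \in Ggen I) = (a \in Ggen (restrI I)) && (b ==> (ord_max \in I)).
Proof.
rewrite !inE; apply/forallP/andP => [H|[/forallP Ha Hb] i].
  split; last by have := H ord_max; rewrite ffunE unlift_none.
  by apply/forallP => i; have := H (lift ord_max i); rewrite ffunE liftK inE.
by rewrite ffunE; case: unliftP => [k ->|->] //; have := Ha k; rewrite inE.
Qed.

Section Invariant.
Variable Q : finType.

Lemma WinvP m (G : {set Dm m}) (w : Conf Q m) :
  reflect (forall g h, g \in G -> w (dadd g h) = w h) (w \in Winv Q G).
Proof.
rewrite inE; apply: (iffP forallP) => [H g h hg|H g].
  by have := H g; rewrite hg => /forallP /(_ h) /eqP.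
by apply/implyP => hg; apply/forallP => h; rewrite H.
Qed.

Variables (m : nat) (I : {set 'I_m.+1}).
Let W := Winv Q (Ggen I).
Let W' := Winv Q (Ggen (restrI I)).

Lemma glue_Winv_notin (x0 x1 : Conf Q m) :
  ord_max \notin I -> (glue x0 x1 \in W) = (x0 \in W') && (x1 \in W').
Proof.
move=> hI; apply/idP/andP => [/WinvP H|[/WinvP H0 /WinvP H1]].
  have half_in b : (if b then x1 else x0) \in W'.
    apply/WinvP => g h hg.
    have := H (dext g false) (dext h b); rewrite Ggen_ext hg /= => /(_ isT).
    by rewrite dadd_ext /= !glue_ext.
  exact: (conj (half_in false) (half_in true)).
apply/WinvP => g h; rewrite -(dext_low_top g) -(dext_low_top h) Ggen_ext.
case/andP=> hg; case: (dtop g) => /=; first by rewrite (negbTE hI).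
by move=> _; rewrite dadd_ext /= !glue_ext; case: (dtop h); [apply: H1|apply: H0].
Qed.

Lemma glue_Winv_in (x0 x1 : Conf Q m) :
  ord_max \in I -> (glue x0 x1 \in W) = (x0 \in W') && (x1 == x0).
Proof.
move=> hI; apply/idP/andP => [/WinvP H|[/WinvP H0 /eqP ->]].
  split.
    apply/WinvP => g h hg.
    have := H (dext g false) (dext h false); rewrite Ggen_ext hg /= => /(_ isT).
    by rewrite dadd_ext /= !glue_ext.
  apply/eqP/ffunP => a.
  have top_in : dext [ffun=> false] true \in Ggen I.
    by rewrite Ggen_ext hI andbT inE; apply/forallP => i; rewrite ffunE.
  have := H _ (dext a false) top_in; rewrite dadd_ext /= !glue_ext.
  by have -> : dadd [ffun=> false] a = a by apply/ffunP => i; rewrite !ffunE.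
apply/WinvP => g h; rewrite -(dext_low_top g) -(dext_low_top h) Ggen_ext.
case/andP=> hg _; rewrite dadd_ext !glue_ext.
by case: (addb _ _); case: (dtop h); rewrite H0.
Qed.

Section BigWinv.
Variables (R : Type) (idx : R) (op : Monoid.com_law idx) (F : Conf Q m.+1 -> R).

Lemma big_Winv_notin : ord_max \notin I ->
  \big[op/idx]_(x in W) F x = \big[op/idx]_(x0 in W') \big[op/idx]_(x1 in W') F (glue x0 x1).
Proof.
move=> hI; rewrite big_mkcond big_Conf_succ [RHS]big_mkcond; apply: eq_bigr => x0 _.
case: ifP => h0; last by apply: big1 => x1 _; rewrite glue_Winv_notin // h0.
by rewrite [RHS]big_mkcond; apply: eq_bigr => x1 _; rewrite glue_Winv_notin // h0.
Qed.

Lemma big_Winv_in : ord_max \in I ->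
  \big[op/idx]_(x in W) F x = \big[op/idx]_(x0 in W') F (glue x0 x0).
Proof.
move=> hI; rewrite big_mkcond big_Conf_succ [RHS]big_mkcond; apply: eq_bigr => x0 _.
case: ifP => h0; last by apply: big1 => x1 _; rewrite glue_Winv_in // h0.
rewrite (bigD1 x0) //= glue_Winv_in // h0 eqxx big1 ?Monoid.mulm1 // => x1 hx.
by rewrite glue_Winv_in // h0 (negbTE hx).
Qed.

End BigWinv.
End Invariant.

Lemma card_Winv_Ggen (Q : finType) m (I : {set 'I_m}) :
  #|Winv Q (Ggen I)| = (#|Q| ^ (2 ^ (m - #|I|)))%N.
Proof.
elim: m I => [|m IH] I.
  have -> : #|I| = 0%N by have := card_set_ord_le I; case: #|I|.
  have -> : Winv Q (Ggen I) = [set: Conf Q 0].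
    apply/setP => w; rewrite in_setT; apply/WinvP => g h _.
    by congr (w _); apply/ffunP => -[].
  by rewrite cardsT !card_ffun card_ord card_bool.
have hr := card_set_ord_le (restrI I).
rewrite -sum1_card (card_restrI I); have [hI|hI] := boolP (ord_max \in I).
  by rewrite big_Winv_in // sum1_card IH addn1 subSS.
rewrite big_Winv_notin //.
under eq_bigr => x0 _ do rewrite sum1_card IH.
by rewrite sum_nat_const IH addn0 subSn // -expnD addnn -mul2n -expnS.
Qed.

Lemma big_Winv_Ggen_setT (Q : finType) m (R : Type) (idx : R) (op : Monoid.com_law idx)
    (F : Conf Q m -> R) :
  \big[op/idx]_(x in Winv Q (Ggen [set: 'I_m])) F x = \big[op/idx]_(c : Q) F [ffun=> c].
Proof.
have -> : Winv Q (Ggen [set: 'I_m]) = [set [ffun=> c] | c : Q].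
  apply/setP => w; apply/idP/imsetP => [/WinvP H|[c _ ->]]; last first.
    by apply/WinvP => g h _; rewrite !ffunE.
  exists (w [ffun=> false]) => //; apply/ffunP => g; rewrite ffunE.
  have -> : g = dadd g [ffun=> false] by apply/ffunP => i; rewrite !ffunE addbF.
  by apply: H; rewrite inE; apply/forallP => i; rewrite inE implybT.
rewrite big_imset //= => c d _ _ /ffunP /(_ [ffun=> false]).
by rewrite !ffunE.
Qed.

Lemma tree_dist_const (Q : finType) m (c d : Q) :
  tree_dist ([ffun=> c] : Conf Q m) [ffun=> d] = (2 ^ m * (c != d))%N.
Proof.
elim: m => [|m IH] /=.
  rewrite mul1n; congr (nat_of_bool (~~ _)).
  by apply/eqP/eqP => [/ffunP /(_ [ffun=> false])|->]; rewrite ?ffunE.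
have half_const (e : Q) b : half ([ffun=> e] : Conf Q m.+1) b = [ffun=> e].
  by apply/ffunP => a; rewrite !ffunE.
by rewrite !half_const IH minnn expnS -mulnA mul2n -addnn.
Qed.

Lemma count_matchings (Q : finType) :
  (\sum_(a : Q) \sum_(b : Q) \sum_(c : Q) \sum_(d : Q)
     (minn ((a != c) + (b != d)) ((a != d) + (b != c)) == 0) + #|Q| = 2 * #|Q| ^ 2)%N.
Proof.
have matchings_ab (a b : Q) : (\sum_(c : Q) \sum_(d : Q)
    (minn ((a != c) + (b != d)) ((a != d) + (b != c)) == 0) = (a != b).+1)%N.
  have -> : (a != b) = ((a, b) != (b, a)) by rewrite xpair_eqE [b == a]eq_sym andbb.
  rewrite pair_bigA /= -cards2 -sum1_card [RHS]big_mkcond /=.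
  apply: eq_bigr => -[c d] _; rewrite !inE !xpair_eqE -leqn0 geq_min !leqn0.
  rewrite !addn_eq0 !eqb0 !negbK /= ![c == _]eq_sym ![d == _]eq_sym.
  by case: (a == c); case: (b == d); case: (a == d); case: (b == c).
under eq_bigr => a _ do under eq_bigr => b _ do rewrite matchings_ab.
have row (a : Q) : (\sum_(b : Q) (a != b).+1 = #|Q| + #|Q|.-1)%N.
  rewrite -(cardC1 a) -!sum1_card [X in (_ = _ + X)%N]big_mkcond -big_split.
  by apply: eq_bigr => b _; rewrite !inE eq_sym.
rewrite (eq_bigr _ (fun a _ => row a)) sum_nat_const.
rewrite -/(#|Q|); case: #|Q| => [|q] //; lia.
Qed.

Local Open Scope R_scope.

Notation "\rsum_ ( i | P ) F" := (\big[Rplus/0]_(i | P) F)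
  (at level 41, F at level 41, i at level 50).
Notation "\rsum_ ( i : t ) F" := (\big[Rplus/0]_(i : t) F)
  (at level 41, F at level 41, i at level 50).
Notation "\rsum_ ( i 'in' A ) F" := (\big[Rplus/0]_(i in A) F)
  (at level 41, F at level 41, i, A at level 50).

Section RealSums.
Variable T : finType.

Lemma sumR_le (P : pred T) (F G : T -> R) :
  (forall i, P i -> F i <= G i) -> \rsum_(i | P i) F i <= \rsum_(i | P i) G i.
Proof. by move=> H; apply: (big_ind2 Rle) => // *; lra. Qed.

Lemma sumR_ge0 (P : pred T) (F : T -> R) :
  (forall i, P i -> 0 <= F i) -> 0 <= \rsum_(i | P i) F i.
Proof. by move=> H; apply: (big_ind (Rle 0)) => // *; lra. Qed.

Lemma sumR_subset_le (A B : {pred T}) (F : T -> R) :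
  {subset A <= B} -> (forall i, i \in B -> 0 <= F i) ->
  \rsum_(i in A) F i <= \rsum_(i in B) F i.
Proof.
move=> sAB F_ge0; rewrite big_mkcond [X in _ <= X]big_mkcond /=.
apply: sumR_le => i _; case: ifP => [/sAB -> |_]; first lra.
by case: ifP => [/F_ge0|_]; lra.
Qed.

Lemma sumR_const (P : pred T) (c : R) : \rsum_(i | P i) c = INR #|P| * c.
Proof.
rewrite (big_const 0 Rplus P); elim: #|P| => [|k IH]; first by rewrite /=; lra.
by rewrite iterS IH S_INR; lra.
Qed.

Lemma INR_sum (P : pred T) (F : T -> nat) :
  INR (\sum_(i | P i) F i) = \rsum_(i | P i) INR (F i).
Proof. exact: (big_morph INR plus_INR). Qed.

Section Sum4.
Variable P : pred T.

Lemma sum4R_le (F G : T -> T -> T -> T -> R) :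
  (forall a b c d, P a -> P b -> P c -> P d -> F a b c d <= G a b c d) ->
  \rsum_(a | P a) \rsum_(b | P b) \rsum_(c | P c) \rsum_(d | P d) F a b c d <=
  \rsum_(a | P a) \rsum_(b | P b) \rsum_(c | P c) \rsum_(d | P d) G a b c d.
Proof. by move=> H; do 4! (apply: sumR_le => ? ?); apply: H. Qed.

Lemma sum4R_add (F G : T -> T -> T -> T -> R) :
  \rsum_(a | P a) \rsum_(b | P b) \rsum_(c | P c) \rsum_(d | P d) (F a b c d + G a b c d) =
  \rsum_(a | P a) \rsum_(b | P b) \rsum_(c | P c) \rsum_(d | P d) F a b c d +
  \rsum_(a | P a) \rsum_(b | P b) \rsum_(c | P c) \rsum_(d | P d) G a b c d.
Proof. by rewrite -big_split; do 3! (apply: eq_bigr => ? _; rewrite -big_split). Qed.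

Lemma sum4R_mul (f g : T -> T -> R) :
  \rsum_(a | P a) \rsum_(b | P b) \rsum_(c | P c) \rsum_(d | P d) (f a c * g b d) =
  (\rsum_(a | P a) \rsum_(c | P c) f a c) * (\rsum_(b | P b) \rsum_(d | P d) g b d).
Proof.
rewrite big_distrl; apply: eq_bigr => a _ /=; rewrite big_distrl exchange_big /=.
by apply: eq_bigr => b _; rewrite big_distrr; apply: eq_bigr => c _; rewrite big_distrr.
Qed.

Lemma sum4R_mul_swap (f g : T -> T -> R) :
  \rsum_(a | P a) \rsum_(b | P b) \rsum_(c | P c) \rsum_(d | P d) (f a d * g b c) =
  (\rsum_(a | P a) \rsum_(c | P c) f a c) * (\rsum_(b | P b) \rsum_(d | P d) g b d).
Proof.
by rewrite -sum4R_mul; apply: eq_bigr => a _; apply: eq_bigr => b _; apply: exchange_big.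
Qed.

End Sum4.
End RealSums.

Lemma exp_monotone x y : x <= y -> exp x <= exp y.
Proof. by case/Rle_lt_or_eq_dec => [/exp_increasing/Rlt_le|->]; [|lra]. Qed.

Lemma INR_expn a b : INR (a ^ b)%N = INR a ^ b.
Proof. by elim: b => [|b IH] //=; rewrite expnS mult_INR IH. Qed.

Lemma INR_exp2 n : INR (2 ^ n)%N = 2 ^ n.
Proof. by elim: n => [|n IH] //=; rewrite expnS mult_INR IH. Qed.

Lemma pow2_gt0 n : 0 < 2 ^ n.
Proof. by apply: pow_lt; lra. Qed.

Lemma ln16_gt0 : 0 < ln 16.
Proof. by rewrite -ln_1; apply: ln_increasing; lra. Qed.

(* With [r] generators in G, [tree_dist] scales like [2^r], hence the normalisation. *)
Definition pair_weight (r l : nat) : R := exp (- (ln 16 / 2 ^ r) * INR l).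

Lemma pair_weight_gt0 r l : 0 < pair_weight r l.
Proof. exact: exp_pos. Qed.

Lemma pair_weightD r a b : pair_weight r (a + b) = pair_weight r a * pair_weight r b.
Proof. by rewrite /pair_weight -exp_plus plus_INR; congr exp; ring. Qed.

Lemma pair_weight_min r a b : pair_weight r (minn a b) <= pair_weight r a + pair_weight r b.
Proof.
have := pair_weight_gt0 r a; have := pair_weight_gt0 r b.
by case: (leqP a b) => _; lra.
Qed.

Lemma pair_weight_double r a : pair_weight r.+1 (a + a) = pair_weight r a.
Proof.
rewrite /pair_weight plus_INR /=; congr exp.
by have h := pow2_gt0 r; field; lra.
Qed.

Lemma pair_weight_pow2 r k : pair_weight r (2 ^ r * k) = / 16 ^ k.
Proof.
rewrite /pair_weight (_ : _ * _ = - ln (16 ^ k)).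
  by rewrite exp_Ropp exp_ln //; apply: pow_lt; lra.
by rewrite mult_INR INR_exp2 ln_pow; [have h := pow2_gt0 r; field; lra | lra].
Qed.

Lemma inv_pow16_le k : / 16 ^ k <= INR (k == 0)%N + / 16.
Proof.
case: k => [|k] /=; first lra.
have : 1 <= 16 ^ k by apply: pow_R1_Rle; lra.
have := Rinv_le_contravar 16 (16 * 16 ^ k); nra.
Qed.

Definition tree_moment (Q : finType) m (I : {set 'I_m}) : R :=
  \rsum_(x in Winv Q (Ggen I)) \rsum_(y in Winv Q (Ggen I)) pair_weight #|I| (tree_dist x y).

Section TreeMoment.
Variable Q : finType.

Lemma tree_moment_ge0 m (I : {set 'I_m}) : 0 <= tree_moment Q I.
Proof. by do 2! apply: sumR_ge0 => ? _; apply: Rlt_le (pair_weight_gt0 _ _). Qed.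

Variables (m : nat) (I : {set 'I_m.+1}).

Lemma tree_moment_in : ord_max \in I -> tree_moment Q I = tree_moment Q (restrI I).
Proof.
move=> hI; rewrite /tree_moment big_Winv_in //; apply: eq_bigr => x _.
rewrite big_Winv_in //; apply: eq_bigr => y _.
by rewrite /= !half_glue minnn (card_restrI I) hI addn1 pair_weight_double.
Qed.

Lemma tree_moment_notin :
  ord_max \notin I -> tree_moment Q I <= 2 * tree_moment Q (restrI I) ^ 2.
Proof.
move=> hI; have r_eq : #|I| = #|restrI I| by rewrite (card_restrI I) (negbTE hI) addn0.
rewrite /tree_moment r_eq big_Winv_notin //.
under eq_bigr => x0 _ do under eq_bigr => x1 _ do rewrite big_Winv_notin //.
set W' := Winv Q (Ggen (restrI I)); set w := pair_weight #|restrI I|.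
apply: Rle_trans (sum4R_le (G := fun a b c d =>
   w (tree_dist a c) * w (tree_dist b d) + w (tree_dist a d) * w (tree_dist b c)) _) _.
  by move=> a b c d _ _ _ _ /=; rewrite !half_glue -!pair_weightD; apply: pair_weight_min.
by rewrite sum4R_add sum4R_mul sum4R_mul_swap; right; ring.
Qed.

Lemma tree_moment_base : (2 <= #|Q|)%N -> ord_max \notin I -> #|restrI I| = m ->
  tree_moment Q I <= 7 / 16 * INR #|Q| ^ 4.
Proof.
move=> hQ hI hm.
have r_eq : #|I| = m by rewrite (card_restrI I) (negbTE hI) addn0.
have full : restrI I = [set: 'I_m].
  by apply/eqP; rewrite eqEcard subsetT cardsT card_ord hm /=.
rewrite /tree_moment r_eq big_Winv_notin // full big_Winv_Ggen_setT.
under eq_bigr => a _ do rewrite big_Winv_Ggen_setT.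
under eq_bigr => a _ do under eq_bigr => b _ do
  rewrite big_Winv_notin // full big_Winv_Ggen_setT.
under eq_bigr => a _ do under eq_bigr => b _ do under eq_bigr => c _ do
  rewrite big_Winv_Ggen_setT.
(* A quadruple weighs 1 when (c, d) is (a, b) or (b, a), and at most 1/16 otherwise. *)
apply: Rle_trans (sum4R_le (G := fun a b c d =>
   INR (minn ((a != c) + (b != d)) ((a != d) + (b != c)) == 0%N) + / 16) _) _.
  move=> a b c d _ _ _ _ /=.
  by rewrite !half_glue !tree_dist_const -!mulnDr -minnMr pair_weight_pow2; apply: inv_pow16_le.
rewrite sum4R_add.
under eq_bigr => a _ do under eq_bigr => b _ do under eq_bigr => c _ do rewrite -INR_sum.
under eq_bigr => a _ do under eq_bigr => b _ do rewrite -INR_sum.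
under eq_bigr => a _ do rewrite -INR_sum.
rewrite -INR_sum !sumR_const -/(#|Q|).
have := f_equal INR (count_matchings Q); rewrite plus_INR mult_INR INR_expn.
have hq : 2 <= INR #|Q| by apply: (le_INR 2); apply/leP.
set q := INR #|Q| in hq *.
have : 0 <= (q - 2) * (3 * q ^ 2 + 6 * q - 4) * q.
  by apply: Rmult_le_pos; [apply: Rmult_le_pos|]; nra.
simpl; nra.
Qed.

End TreeMoment.

Lemma pow_expn2S x n : x ^ (2 ^ n.+1) = (x ^ (2 ^ n)) ^ 2.
Proof. by rewrite -pow_mult expnSr. Qed.

Lemma tree_moment_le (Q : finType) m (I : {set 'I_m}) n :
  (2 <= #|Q|)%N -> (m - #|I| = n.+1)%N ->
  tree_moment Q I <= / 2 * (7 / 8) ^ (2 ^ n) * INR #|Q| ^ (2 ^ n.+2).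
Proof.
move=> hQ; elim: m I n => [|m IH] I n; first by rewrite sub0n.
have hr := card_set_ord_le (restrI I).
have [hI|hI] := boolP (ord_max \in I).
  by rewrite tree_moment_in // (card_restrI I) hI addn1 subSS; apply: IH.
rewrite (card_restrI I) (negbTE hI) addn0 subSn // => -[].
case: n => [|n] hn.
  have hm : #|restrI I| = m by apply/eqP; rewrite eqn_leq hr -subn_eq0 hn.
  by apply: Rle_trans (tree_moment_base hQ hI hm) _; rewrite /=; right; field.
apply: Rle_trans (tree_moment_notin Q hI) _.
have M_le := IH _ _ hn; have M_ge0 := tree_moment_ge0 Q (restrI I).
rewrite [(7 / 8) ^ _]pow_expn2S [INR #|Q| ^ _]pow_expn2S.
set a := (7 / 8) ^ _ in M_le *; set w := INR #|Q| ^ _ in M_le *.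
have : tree_moment Q (restrI I) ^ 2 <= (/ 2 * a * w) ^ 2 by apply: pow_incr.
by move/(Rmult_le_compat_l 2) => /(_ ltac:(lra)) /Rle_trans; apply; right; field.
Qed.

Section DistM.
Variables (Q : finType) (m : nat).

Lemma tree_dist_le_dist_m (x y : Conf Q m) : INR (tree_dist x y) / 2 ^ m <= dist_m x y.
Proof.
have le_mismatch (s : Dm m -> Dm m) : tree_map s ->
    INR (tree_dist x y) / 2 ^ m <= INR #|[set g | x g != y (s g)]| / 2 ^ m.
  move=> s_tree; apply: Rmult_le_compat_r; first exact/Rlt_le/Rinv_0_lt_compat/pow2_gt0.
  exact/le_INR/leP/tree_dist_le_mismatch.
apply: (big_rec (fun v => _ <= v)); first exact: (le_mismatch id).
move=> S v hS hv; apply: Rmin_glb => //; rewrite /dH.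
have -> : [set g | x g != tact S y g] = [set g | x g != y ((S^-1)%g g)].
  by apply/setP => g; rewrite !inE ffunE.
exact/le_mismatch/tree_map_invg/Tm_tree_map.
Qed.

Lemma dist_m_self_le0 (x : Conf Q m) : dist_m x x <= 0.
Proof.
apply: (big_rec (fun v => v <= 0)) => [|S v _ hv]; last exact: Rle_trans (Rmin_r _ _) hv.
rewrite /dH (_ : [set g | x g != x g] = set0); last by apply/setP => g; rewrite !inE eqxx.
by rewrite cards0 /Rdiv Rmult_0_l; lra.
Qed.

End DistM.

Lemma bigRmax_ge (T : finType) (P : pred T) (F : T -> R) x :
  P x -> F x <= \big[Rmax/0]_(i | P i) F i.
Proof.
rewrite unlock; have : x \in index_enum T by rewrite mem_index_enum.
elim: (index_enum T) => [//|a s IH] /=; rewrite inE => /orP [/eqP <- ->|xs Px].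
  exact: Rmax_l.
by case: ifP => _; [apply: Rle_trans (IH xs Px) (Rmax_r _ _)|apply: IH].
Qed.

Section Diam.
Variables (T : finType) (d : T -> T -> R) (X : {set T}).

Lemma diam_ge x y : x \in X -> y \in X -> d x y <= diam d X.
Proof.
move=> hx hy; apply: Rle_trans (bigRmax_ge (fun x => \big[Rmax/0]_(y in X) d x y) hx).
exact: (bigRmax_ge (d x) hy).
Qed.

Lemma diam_le0 : (forall x y, x \in X -> y \in X -> d x y <= 0) -> diam d X <= 0.
Proof.
move=> H; apply: (big_rec (fun v => v <= 0)) => [|x v hx hv]; first lra.
apply: Rmax_lub => //; apply: (big_rec (fun v => v <= 0)) => [|y u hy hu]; first lra.
by apply: Rmax_lub => //; apply: H.
Qed.

End Diam.

Section CloseSets.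
Variables (Q : finType) (m : nat) (I : {set 'I_m}) (C : {set Conf Q m}) (eps : R).
Hypothesis sCW : C \subset Winv Q (Ggen I).
Hypothesis C_close : forall x y, x \in C -> y \in C -> dist_m x y < eps.

Lemma card_close_set_sq_le :
  INR #|C| ^ 2 <= exp (ln 16 * eps * 2 ^ (m - #|I|)) * tree_moment Q I.
Proof.
set K := exp _; set w := pair_weight #|I|.
have K_gt0 : 0 < K by apply: exp_pos.
have weight_ge x y : x \in C -> y \in C -> 1 <= K * w (tree_dist x y).
  move=> hx hy; have := Rle_lt_trans _ _ _ (tree_dist_le_dist_m x y) (C_close hx hy).
  have r_gt0 := pow2_gt0 #|I|; have n_gt0 := pow2_gt0 (m - #|I|).
  rewrite [2 ^ m](_ : _ = 2 ^ #|I| * 2 ^ (m - #|I|)) => [hL|]; last first.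
    by rewrite -pow_add plusE subnKC // card_set_ord_le.
  have {}hL : INR (tree_dist x y) / 2 ^ #|I| < eps * 2 ^ (m - #|I|).
    apply: (Rmult_lt_reg_r (/ 2 ^ (m - #|I|))); first exact: Rinv_0_lt_compat.
    by rewrite Rinv_r_simpl_l; [rewrite /Rdiv Rinv_mult -Rmult_assoc in hL|lra].
  rewrite /K /w /pair_weight -exp_plus -exp_0; apply/Rlt_le/exp_increasing.
  have := Rmult_lt_compat_l _ _ _ ln16_gt0 hL; rewrite /Rdiv; lra.
have -> : INR #|C| ^ 2 = \rsum_(x in C) \rsum_(y in C) 1 by rewrite !sumR_const /=.
apply: (Rle_trans _ (\rsum_(x in C) \rsum_(y in C) (K * w (tree_dist x y)))).
  apply: (@sumR_le _ (fun x => x \in C)) => x hx.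
  by apply: (@sumR_le _ (fun x => x \in C)) => y hy; apply: weight_ge.
have Kw_ge0 (x y : Conf Q m) : 0 <= K * w (tree_dist x y).
  by apply: Rmult_le_pos; [lra|apply/Rlt_le/pair_weight_gt0].
rewrite /tree_moment big_distrr /=.
apply: Rle_trans (sumR_subset_le (subsetP sCW) (fun x _ => sumR_ge0 (fun y _ => Kw_ge0 x y))) _.
apply: (@sumR_le _ (fun x => x \in Winv Q (Ggen I))) => x _; rewrite big_distrr /=.
exact: sumR_subset_le (subsetP sCW) (fun y _ => Kw_ge0 x y).
Qed.

Lemma card_close_set_le n : (2 <= #|Q|)%N -> (m - #|I| = n.+2)%N ->
  2 * ln 16 * eps <= ln (15 / 14) -> INR #|C| <= (15 / 16) ^ (2 ^ n) * INR #|Q| ^ (2 ^ n.+2).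
Proof.
move=> hQ hn eps_small.
have K_le : exp (ln 16 * eps * 2 ^ (m - #|I|)) <= ((15 / 14) ^ (2 ^ n)) ^ 2.
  rewrite hn -pow_expn2S -(@Rpower_pow (2 ^ n.+1)) ?INR_exp2 /Rpower; last lra.
  apply: exp_monotone; rewrite (_ : 2 ^ n.+2 = 2 * 2 ^ n.+1) //.
  have := Rmult_le_compat_r _ _ _ (Rlt_le _ _ (pow2_gt0 n.+1)) eps_small; lra.
have M_le := tree_moment_le hQ hn; have M_ge0 := tree_moment_ge0 Q I.
rewrite [(7 / 8) ^ _]pow_expn2S [INR #|Q| ^ (2 ^ n.+3)]pow_expn2S in M_le.
have w_ge0 : 0 <= INR #|Q| ^ 2 ^ n.+2 by apply: pow_le; apply: pos_INR.
have ab_eq : (15 / 14) ^ 2 ^ n * (7 / 8) ^ 2 ^ n = (15 / 16) ^ 2 ^ n.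
  by rewrite -Rpow_mult_distr; congr pow; field.
have c_ge0 : 0 <= (15 / 16) ^ 2 ^ n by apply: pow_le; lra.
have := card_close_set_sq_le; rewrite -!Rsqr_pow2 => C_le.
apply: Rsqr_incr_0_var; last exact: Rmult_le_pos.
apply: Rle_trans C_le _.
apply: Rle_trans (Rmult_le_compat _ _ _ _ (Rlt_le _ _ (exp_pos _)) M_ge0 K_le M_le) _.
rewrite -ab_eq /Rsqr; set a := (15 / 14) ^ _; set b := (7 / 8) ^ _; set w := INR _ ^ _.
have := pow2_ge_0 (a * b * w); lra.
Qed.

End CloseSets.

Section UniformPartitions.
Variables (T : finType) (W : {set T}) (d : T -> T -> R) (eps : R).

Lemma admissible_singletons :
  0 < eps -> (forall x, d x x <= 0) -> admissible (nu_unif W) d eps #|W|.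
Proof.
move=> eps_gt0 d_refl.
(* Outside W, [index] is #|W| and [inord] sends #|W|.+1 to 0: the complement of W is block 0. *)
pose f x : 'I_#|W|.+1 := inord (index x (enum W)).+1.
have f_val x : nat_of_ord (f x) = if x \in W then (index x (enum W)).+1 else 0%N.
  have idx_lt : ((index x (enum W)).+1 < #|W|.+1)%N = (x \in W).
    by rewrite ltnS cardE index_mem mem_enum.
  rewrite /f /inord /insubd; case: insubP => [u|] /=; rewrite idx_lt; first by move=> -> ->.
  by move/negbTE ->.
exists f; split.
  rewrite /nu_unif (_ : _ :&: W = set0) ?cards0 /Rdiv ?Rmult_0_l //.
  by apply/setP => x; rewrite !inE f_val; case: (x \in W).
move=> j j_gt0; apply: Rle_lt_trans eps_gt0; apply: diam_le0 => x y.
rewrite !inE => /eqP fx /eqP fy.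
have : nat_of_ord (f x) = f y by rewrite fx fy.
rewrite !f_val; case: ifP => [xW|xW]; case: ifP => [yW|yW] //; last first.
  by move: j_gt0; rewrite -fx f_val xW.
move=> [] /(congr1 (nth x (enum W))); rewrite !nth_index ?mem_enum // => <-.
exact: d_refl.
Qed.

Lemma admissible_card_gt k beta : (0 < #|W|)%N ->
  (forall C : {set T}, C \subset W -> (forall x y, x \in C -> y \in C -> d x y < eps) ->
     INR #|C| <= beta * INR #|W|) ->
  admissible (nu_unif W) d eps k -> 1 - eps < INR k * beta.
Proof.
move=> W_gt0 small_le [f [f0 f_diam]].
have W_pos : 0 < INR #|W| by apply/lt_0_INR/ltP.
pose block (j : 'I_k.+1) := [set x in W | f x == j].
have W_sum : INR #|W| = \rsum_(j : 'I_k.+1) INR #|block j|.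
  rewrite -INR_sum -sum1_card (partition_big f xpredT) //=; congr INR.
  by apply: eq_bigr => j _; rewrite -sum1_card; apply: eq_bigl => x; rewrite inE.
have block0 : INR #|block ord0| < eps * INR #|W|.
  move: f0; rewrite /nu_unif (_ : _ :&: W = block ord0); last first.
    by apply/setP => x; rewrite !inE andbC.
  move/(Rmult_lt_compat_r _ _ _ W_pos); rewrite /Rdiv Rmult_assoc Rinv_l ?Rmult_1_r //; lra.
have blockj (j : 'I_k.+1) : j != ord0 -> INR #|block j| <= beta * INR #|W|.
  move=> j0; apply: small_le => [|x y]; first by apply/subsetP => x; rewrite inE => /andP [].
  rewrite !inE => /andP [_ fx] /andP [_ fy].
  by apply: Rle_lt_trans (f_diam j _); [apply: diam_ge; rewrite inE|rewrite lt0n].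
have others : \big[Rplus/0]_(j < k.+1 | j != ord0) INR #|block j| <= INR k * (beta * INR #|W|).
  apply: Rle_trans (sumR_le blockj) _; rewrite sumR_const; right; congr (INR _ * _).
  by rewrite cardC1 card_ord.
rewrite (bigD1 ord0) //= in W_sum.
have := Rplus_lt_le_compat _ _ _ _ block0 others; rewrite -W_sum => W_lt.
have : (1 - eps) * INR #|W| < (INR k * beta) * INR #|W| by lra.
by move/(Rmult_lt_reg_r _ _ _ W_pos).
Qed.

End UniformPartitions.

Lemma kmin_least_admissible (T : finType) (mu : {set T} -> R) (d : T -> T -> R) eps k :
  admissible mu d eps k -> least_admissible mu d eps (kmin mu d eps).
Proof.
move=> adm_k; apply: epsilon_spec.
have [k' [[adm_k' k'_min] _]] := dec_inh_nat_subset_has_unique_least_element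
  (admissible mu d eps) (fun k => classic _) (ex_intro _ k adm_k).
by exists k'; split=> // k'' /k'_min /leP.
Qed.

Lemma kmin_Winv_bounds (Q : finType) m (I : {set 'I_m}) eps n :
  (2 <= #|Q|)%N -> (m - #|I| = n.+2)%N -> 0 < eps -> 2 * ln 16 * eps <= ln (15 / 14) ->
  let k := kmin (nu_unif (Winv Q (Ggen I))) (@dist_m Q m) eps in
  (1 - eps) * (16 / 15) ^ (2 ^ n) < INR k /\ INR k <= INR #|Q| ^ (2 ^ n.+2).
Proof.
move=> hQ hn eps_gt0 eps_small k.
have W_card : INR #|Winv Q (Ggen I)| = INR #|Q| ^ (2 ^ n.+2).
  by rewrite card_Winv_Ggen hn INR_expn.
have adm_W := admissible_singletons (Winv Q (Ggen I)) eps_gt0 (@dist_m_self_le0 Q m).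
have [adm_k k_min] := kmin_least_admissible adm_W; split; last first.
  by rewrite -W_card; apply/le_INR/leP/k_min.
have W_gt0 : (0 < #|Winv Q (Ggen I)|)%N by rewrite card_Winv_Ggen expn_gt0 (ltnW hQ).
have small_le (C : {set Conf Q m}) : C \subset Winv Q (Ggen I) ->
    (forall x y, x \in C -> y \in C -> dist_m x y < eps) ->
    INR #|C| <= (15 / 16) ^ (2 ^ n) * INR #|Winv Q (Ggen I)|.
  move=> sCW C_close; rewrite W_card; exact: (card_close_set_le sCW C_close hQ hn eps_small).
have := admissible_card_gt W_gt0 small_le adm_k.
have G_gt0 : 0 < (16 / 15) ^ (2 ^ n) by apply: pow_lt; lra.
move/(Rmult_lt_compat_r _ _ _ G_gt0); rewrite Rmult_assoc -Rpow_mult_distr.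
by rewrite (_ : 15 / 16 * (16 / 15) = 1) ?pow1 ?Rmult_1_r //; field.
Qed.

Lemma log2_le x y : 0 < x -> x <= y -> log2 x <= log2 y.
Proof.
move=> x_gt0 /Rle_lt_or_eq_dec [lt_xy|<-]; last lra.
apply: Rmult_le_compat_r; last exact/Rlt_le/ln_increasing.
by apply/Rlt_le/Rinv_0_lt_compat; rewrite -ln_1; apply: ln_increasing; lra.
Qed.

Lemma log2_mult x y : 0 < x -> 0 < y -> log2 (x * y) = log2 x + log2 y.
Proof. by move=> x_gt0 y_gt0; rewrite /log2 ln_mult //; field; apply: ln_neq_0; lra. Qed.

Lemma log2_pow x n : 0 < x -> log2 (x ^ n) = INR n * log2 x.
Proof. by move=> x_gt0; rewrite /log2 ln_pow //; field; apply: ln_neq_0; lra. Qed.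

Lemma log2_inv2 : log2 (/ 2) = -1.
Proof. by rewrite /log2 ln_Rinv; [field; apply: ln_neq_0|]; lra. Qed.

Lemma pow2_eventually_ge (a b : R) : 0 < a -> exists N, forall n, (N <= n)%N -> b <= a * 2 ^ n.
Proof.
move=> a_gt0; have [N hN] := INR_archimed a b a_gt0.
exists N => n hn; apply/Rlt_le/(Rlt_le_trans _ _ _ hN); rewrite Rmult_comm.
apply: Rmult_le_compat_l; first lra.
by rewrite -INR_exp2; apply/le_INR/leP/(leq_trans hn)/ltnW/ltn_expl.
Qed.

Lemma Hent_Winv_bounds (Q : finType) m (I : {set 'I_m}) eps n :
  (2 <= #|Q|)%N -> (m - #|I| = n.+2)%N -> 0 < eps <= / 2 -> 2 * ln 16 * eps <= ln (15 / 14) ->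
  log2 (16 / 15) * 2 ^ n - 1 <= Hent (nu_unif (Winv Q (Ggen I))) (@dist_m Q m) eps <=
  2 ^ n.+2 * log2 (INR #|Q|).
Proof.
move=> hQ hn [eps_gt0 eps_half] eps_small.
have [k_lo k_hi] := kmin_Winv_bounds hQ hn eps_gt0 eps_small; rewrite /Hent.
have G_gt0 : 0 < (16 / 15) ^ (2 ^ n) by apply: pow_lt; lra.
have Q_gt0 : 0 < INR #|Q| by apply/lt_0_INR/ltP/(ltnW hQ).
split.
  apply: Rle_trans (log2_le _ (Rlt_le _ _ k_lo)); last by apply: Rmult_lt_0_compat; lra.
  rewrite log2_mult ?log2_pow ?INR_exp2; try lra.
  by have := log2_le (ltac:(lra) : 0 < / 2) (ltac:(lra) : / 2 <= 1 - eps); rewrite log2_inv2; lra.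
apply: Rle_trans (log2_le _ k_hi) _; first by apply: Rlt_trans k_lo; apply: Rmult_lt_0_compat; lra.
by rewrite log2_pow // INR_exp2; lra.
Qed.

Theorem lemma17 :
  forall q : nat, (2 <= q)%N ->
  exists eps0 : R, 0 < eps0 /\
  forall eps : R, 0 < eps < eps0 ->
  exists c C : R, 0 < c /\ c <= C /\
  exists N : nat,
  forall (Q : finType) (m r : nat) (I : {set 'I_m}),
    #|Q| = q -> #|I| = r -> (N <= m - r)%N ->
    c * 2 ^ (m - r) <=
      Hent (nu_unif (Winv Q (Ggen I))) (@dist_m Q m) eps <= C * 2 ^ (m - r).
Proof.
move=> q hq; have ln16_pos := ln16_gt0.
have ln_lt : 0 < ln (15 / 14) < ln 16 by split; [rewrite -ln_1|]; apply: ln_increasing; lra.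
exists (ln (15 / 14) / (2 * ln 16)); split; first by apply: Rdiv_lt_0_compat; lra.
move=> eps [eps_gt0 eps_lt].
have eps_small : 2 * ln 16 * eps <= ln (15 / 14).
  apply: Rlt_le; move/(Rmult_lt_compat_l (2 * ln 16)): eps_lt => /(_ ltac:(lra)).
  by rewrite /Rdiv -Rmult_assoc Rinv_r_simpl_m; lra.
have eps_half : eps <= / 2 by nra.
have c1_gt0 : 0 < log2 (16 / 15).
  by apply: Rdiv_lt_0_compat; rewrite -ln_1; apply: ln_increasing; lra.
have log2q_ge0 : 0 <= log2 (INR q).
  apply/Rlt_le/Rdiv_lt_0_compat; rewrite -ln_1; apply: ln_increasing; try lra.
  by apply: (lt_INR 1); apply/ltP.
exists (log2 (16 / 15) / 8), (log2 (16 / 15) / 8 + log2 (INR q)).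
split; first lra; split; first lra.
have [N hN] := pow2_eventually_ge 2 c1_gt0.
exists N.+2 => Q m r I hQ hI hmr; have [n hn] : exists n, (m - r = n.+2)%N.
  by exists (m - r - 2)%N; lia.
have := hN n ltac:(lia); rewrite -hI in hn.
have hQ2 : (2 <= #|Q|)%N by rewrite hQ.
have [lo hi] := Hent_Winv_bounds hQ2 hn (conj eps_gt0 eps_half) eps_small.
have pow2n2 : 2 ^ n.+2 = 4 * 2 ^ n by rewrite /=; ring.
rewrite -hI hn hQ pow2n2 in hi *; split; nra.
Qed.
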